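(* Let $\mu$ be a Borel probability measure on the metric space $(X,d)$ and $k\geq2$ an integer. Then \[(k-1)\underline{D}_k(\mu)=\liminf_{r\to0}\frac{\log\int_{X^k}\prod_{j=1}^{k-1}\prod_{l=j+1}^k\mathbbm{1}_{B(x_j,r)}(x_l)\,d\mu^k(x_1,\dots,x_k)}{\log r}\] and \[(k-1)\overline{D}_k(\mu)=\limsup_{r\to0}\frac{\log\int_{X^k}\prod_{j=1}^{k-1}\prod_{l=j+1}^k\mathbbm{1}_{B(x_j,r)}(x_l)\,d\mu^k(x_1,\dots,x_k)}{\log r}.\]
   Context: $(X,d)$ is a finite dimensional metric space (standing assumption of the paper); $B(x,r)$ is the open ball, $\mu^k$ the product measure. $\underline{D}_k(\mu)=\liminf_{r\to0}\frac{\log\int_X\mu(B(x,r))^{k-1}d\mu(x)}{(k-1)\log r}$ and $\overline{D}_k(\mu)$ is the same with $\limsup$. *)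

From HB Require Import structures.
From mathcomp Require Import all_boot all_order all_algebra.
From mathcomp Require Import all_classical all_reals all_analysis.

Set Implicit Arguments.
Unset Strict Implicit.
Unset Printing Implicit Defensive.

Import Order.TTheory GRing.Theory Num.Theory.
Import numFieldNormedType.Exports.

Local Open Scope classical_set_scope.
Local Open Scope ring_scope.

Section metric_defs.
Variables (R : realType) (X : Type) (d : X -> X -> R).

Definition is_metric : Prop :=
  [/\ forall x y, 0 <= d x y,
      forall x y, d x y = 0 <-> x = y,
      forall x y, d x y = d y x &
      forall x y z, d x z <= d x y + d y z].

Definition oball (x : X) (r : R) : set X := [set y | d x y < r].

Definition metric_open (A : set X) : Prop :=
  forall x, A x -> exists2 r : R, 0 < r & oball x r `<=` A.

Definition finite_dimensional : Prop :=
  exists N : nat, forall (x : X) (r : R), 0 < r ->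
    exists c : 'I_N -> X,
      oball x (2 * r) `<=` \bigcup_(i in [set: 'I_N]) oball (c i) r.
End metric_defs.

Section product_power.
Local Open Scope ereal_scope.
Variables (R : realType) (disp : measure_display) (X : measurableType disp).
Variable mu : set X -> \bar R.

(** The k-fold product measure mu^k on X^k (= k.-tuple X), built
    iteratively as mu^(n+1) = mu \x mu^n via sections, exactly as the
    library's product measure [m1 \x m2] := fun A => \int[m1]_x m2 (xsection A x),
    with X * X^n identified with X^(n+1) through (x, t) |-> x :: t. *)
Fixpoint prod_pow (n : nat) : set (n.-tuple X) -> \bar R :=
  match n return set (n.-tuple X) -> \bar R with
  | 0 => fun A => ((\1_A (nil_tuple X) : R))%:E
  | S m => fun A => \int[mu]_x @prod_pow m [set t | A (cons_tuple x t)]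
  end.
End product_power.
Arguments prod_pow {R disp X} mu n.

Section correlation_dimensions.
Local Open Scope ereal_scope.
Variables (R : realType) (disp : measure_display) (X : measurableType disp).
Variables (d : X -> X -> R) (mu : set X -> \bar R).

Definition corr_integral (k : nat) (r : R) : \bar R :=
  \int[mu]_x ((fine (mu (oball d x r)) ^+ k.-1)%R)%:E.

Definition Dk_ratio (k : nat) (r : R) : \bar R :=
  ((ln (fine (corr_integral k r)) / ((k.-1)%:R * ln r))%R)%:E.

Definition lower_Dk (k : nat) : \bar R := limf_einf (Dk_ratio k) (0%R)^'+.
Definition upper_Dk (k : nat) : \bar R := limf_esup (Dk_ratio k) (0%R)^'+.

Definition chain_integral (k : nat) (r : R) : \bar R :=
  \int[prod_pow mu k]_x
    ((\prod_(j < k) \prod_(l < k | (j < l)%N)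
        \1_(oball d (tnth x j) r) (tnth x l) : R))%:E.

Definition chain_ratio (k : nat) (r : R) : \bar R :=
  ((ln (fine (chain_integral k r)) / ln r)%R)%:E.
End correlation_dimensions.

(* Unfolding the iterated integral defining mu^k, the correlation integral
   C(r) = \int mu(B(x,r))^(k-1) dmu(x) is mu^k(T_r), where T_r is the set of
   tuples lying in the r-ball around their first point, while the chain
   integral is the mu^k-integral of the indicator of the set S_r of tuples
   whose points are pairwise closer than r.  The triangle inequality gives
   T_(r/2) <= S_r <= T_r, so the chain integral lies between C(r/2) and C(r).
   After taking logarithms and dividing by ln r < 0, the two bounds differ
   only through ln(r/2) versus ln r, whose ratio tends to 1, so liminf and
   limsup are unchanged.  Finite dimensionality makes X separable, which is
   what makes T_r measurable and provides a ball of positive mass, so that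
   C(r) > 0 and the logarithms are finite. *)

From HB Require Import structures.
From mathcomp Require Import all_boot all_order all_algebra.
From mathcomp Require Import all_classical all_reals all_analysis.
From mathcomp Require Import lra.

Set Implicit Arguments.
Unset Strict Implicit.
Unset Printing Implicit Defensive.

Import Order.TTheory GRing.Theory Num.Theory.
Import numFieldNormedType.Exports.
Local Open Scope classical_set_scope.
Local Open Scope ring_scope.
Import HBNNSimple.

Section limf_filter.
Local Open Scope ereal_scope.
Context {T : choiceType} {Y : filteredType T} {R : realType}.
Implicit Types (f g : Y -> \bar R) (F : set_system Y).

Lemma le_limf_esup F f g : Filter F -> (\forall x \near F, f x <= g x) ->
  limf_esup f F <= limf_esup g F.
Proof.
move=> FF fg; rewrite !limf_esupE; apply: le_ereal_inf_tmp => _ [V FV <-].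
apply: ge_ereal_inf; exists (ereal_sup (f @` (V `&` [set x | f x <= g x]))).
  by exists (V `&` [set x | f x <= g x]) => //; exact: filterI.
apply: ge_ereal_sup => _ [x [Vx fgx] <-].
by apply: le_trans fgx _; apply: ereal_sup_ubound; exists x.
Qed.

Lemma le_limf_einf F f g : Filter F -> (\forall x \near F, f x <= g x) ->
  limf_einf f F <= limf_einf g F.
Proof.
move=> FF fg; rewrite /limf_einf leeN2 le_limf_esup//.
by apply: filterS fg => x; rewrite leeN2.
Qed.

Lemma limf_esupZl F c f : (0 < c)%R ->
  limf_esup (fun x => c%:E * f x) F = c%:E * limf_esup f F.
Proof.
move=> c0; rewrite !limf_esupE -ereal_inf_pZl//; congr ereal_inf.
rewrite image_comp; apply: eq_imagel => V _ /=.
by rewrite -ereal_sup_pZl// image_comp.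
Qed.

Lemma limf_einfZl F c f : (0 < c)%R ->
  limf_einf (fun x => c%:E * f x) F = c%:E * limf_einf f F.
Proof.
move=> c0; rewrite /limf_einf muleN -limf_esupZl//.
by congr (- limf_esup _ _); apply/funext => x /=; rewrite muleN.
Qed.

Lemma limf_esup_comp_le {T' : choiceType} {Y' : filteredType T'}
    (h : Y' -> Y) (F' : set_system Y') F f :
  h @ F' --> F -> limf_esup (f \o h) F' <= limf_esup f F.
Proof.
move=> hF; rewrite !limf_esupE; apply: le_ereal_inf_tmp => _ [V FV <-].
apply: ge_ereal_inf; exists (ereal_sup ((f \o h) @` (h @^-1` V))).
  by exists (h @^-1` V) => //; exact: hF.
by apply: ereal_sup_le => _ [x Vhx <-]; exists (h x).
Qed.

Lemma limf_einf_comp_ge {T' : choiceType} {Y' : filteredType T'}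
    (h : Y' -> Y) (F' : set_system Y') F f :
  h @ F' --> F -> limf_einf f F <= limf_einf (f \o h) F'.
Proof. by move=> hF; rewrite /limf_einf leeN2; exact: limf_esup_comp_le. Qed.

End limf_filter.

Lemma cvg_at_right0_mulr {R : realType} (c : R) : 0 < c ->
  (fun r => r * c) @ 0^'+ --> 0^'+.
Proof.
move=> c0 P /nbhs_ballP[e /= e0 Pe]; apply/nbhs_ballP.
exists (e / c) => [|r /=]; first exact: divr_gt0.
rewrite /ball /= sub0r normrN => re r0; apply: Pe; last by rewrite mulr_gt0.
by rewrite /ball /= sub0r normrN normrM (gtr0_norm c0) -ltr_pdivlMr.
Qed.

Section lee_mul.
Local Open Scope ereal_scope.
Variable R : realType.

Lemma lee_mulgt1_le (x y : \bar R) :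
  (forall c : R, (1 < c)%R -> x <= c%:E * y) -> x <= y.
Proof.
move=> xy; have [y0|y0] := leP 0 y.
  have [x0|x0] := leP x 0; first exact: le_trans x0 y0.
  apply/(lee_mul01Pr y (ltW x0)) => r /andP[r0 r1].
  by rewrite -lee_pdivlMl// xy// invf_gt1.
apply: le_trans (xy 2%:R _) _; first by rewrite ltr1n.
by rewrite mule_natl mule2n geeDl// ltW.
Qed.
End lee_mul.

Section rescaled_sandwich.
Local Open Scope ereal_scope.
Variable R : realType.
Variable lim : (R -> \bar R) -> \bar R.
Hypothesis le_lim : forall f g, (\forall r \near 0%R^'+, f r <= g r) -> lim f <= lim g.
Hypothesis limZl : forall c f, (0 < c)%R -> lim (fun r => c%:E * f r) = c%:E * lim f.
Hypothesis lim_half : forall f, lim (fun r => f (r / 2)%R) <= lim f.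

Lemma eq_lim_sandwich_half (a b : R -> \bar R) :
  (\forall r \near 0%R^'+, a r <= b r) ->
  (forall c, (1 < c)%R -> \forall r \near 0%R^'+, b r <= c%:E * a (r / 2)%R) ->
  lim a = lim b.
Proof.
move=> ab bca; apply/eqP; rewrite eq_le le_lim//=.
apply: lee_mulgt1_le => c c1; have c0 : (0 < c)%R := lt_trans ltr01 c1.
rewrite (le_trans (le_lim (bca c c1)))// limZl//.
by apply: lee_wpmul2l; [rewrite lee_fin ltW | exact: lim_half].
Qed.
End rescaled_sandwich.

Section limf_at_right0.
Local Open Scope ereal_scope.
Variable R : realType.
Implicit Type f : R -> \bar R.

Lemma limf_esup_half f :
  limf_esup (fun r : R => f (r / 2)%R) 0%R^'+ <= limf_esup f 0%R^'+.
Proof. by apply: limf_esup_comp_le; apply: cvg_at_right0_mulr. Qed.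

Lemma limf_einf_half f :
  limf_einf (fun r : R => f (r / 2)%R) 0%R^'+ <= limf_einf f 0%R^'+.
Proof.
have {2}-> : f = (fun r => f (r / 2)%R) \o (fun r : R => r * 2)%R.
  by apply/funext => r /=; rewrite mulfK.
by apply: limf_einf_comp_ge; apply: cvg_at_right0_mulr.
Qed.

Lemma limf_einf_sandwich_half (a b : R -> \bar R) :
  (\forall r \near 0%R^'+, a r <= b r) ->
  (forall c, (1 < c)%R -> \forall r \near 0%R^'+, b r <= c%:E * a (r / 2)%R) ->
  limf_einf a 0%R^'+ = limf_einf b 0%R^'+.
Proof.
apply: (@eq_lim_sandwich_half R (fun f => limf_einf f 0%R^'+)) => [f g|c f|f].
- exact: le_limf_einf.
- exact: limf_einfZl.
- exact: limf_einf_half.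
Qed.

Lemma limf_esup_sandwich_half (a b : R -> \bar R) :
  (\forall r \near 0%R^'+, a r <= b r) ->
  (forall c, (1 < c)%R -> \forall r \near 0%R^'+, b r <= c%:E * a (r / 2)%R) ->
  limf_esup a 0%R^'+ = limf_esup b 0%R^'+.
Proof.
apply: (@eq_lim_sandwich_half R (fun f => limf_esup f 0%R^'+)) => [f g|c f|f].
- exact: le_limf_esup.
- exact: limf_esupZl.
- exact: limf_esup_half.
Qed.
End limf_at_right0.

Lemma ln_ratio_halve_le {R : realType} (x y r c : R) :
  0 < x <= y -> y <= 1 -> 1 < c -> 0 < r -> ln r <= - ln 2 / (c - 1) ->
  ln y / ln r <= c * (ln x / ln (r / 2)).
Proof.
move=> /andP[x0 xy] y1 c1 r0 rc.
have ln2_gt0 : 0 < ln (2 : R) by rewrite ln_gt0// ltr1n.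
have lnr_lt0 : ln r < 0.
  by rewrite (le_lt_trans rc)// mulNr oppr_lt0 divr_gt0// subr_gt0.
have lnr_le : (c - 1) * ln r <= - ln 2 by rewrite mulrC -ler_pdivlMr ?subr_gt0.
have lnxy : ln x <= ln y by rewrite ler_ln ?posrE// (lt_le_trans x0).
have lnx_le0 : ln x <= 0 by rewrite ln_le0// (le_trans xy).
rewrite ln_div ?posrE//.
apply: le_trans (_ : ln x / ln r <= _); first by rewrite ler_wnM2r// invr_le0 ltW.
rewrite -(ler_nM2r lnr_lt0) divfK ?lt_eqF//.
move: (ln x) (ln r) (ln 2) lnx_le0 lnr_lt0 ln2_gt0 lnr_le => u L l u0 L0 l0 Ll.
have Ll0 : L - l < 0 by rewrite subr_lt0 (lt_trans L0).
pose q := u / (L - l); have uq : u = q * (L - l) by rewrite divfK ?lt_eqF.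
have q0 : 0 <= q by rewrite mulr_le0// invr_le0 ltW.
by rewrite -/q uq; nra.
Qed.

(* The integrals below are taken against set functions that are not known to
   be measures ([prod_pow mu k] is only monotone and superadditive) and of
   functions that are not known to be measurable (such as x |-> mu (B(x, r))),
   so they are handled through the definition of the integral as a supremum
   of integrals of simple functions. *)
Section setfun_integral.
Local Open Scope ereal_scope.
Context d (T : measurableType d) (R : realType) (m : set T -> \bar R).
Hypothesis m0 : m set0 = 0.

Lemma sintegral_indic_setfun (A : set T) : sintegral m \1_A = m A.
Proof.
rewrite /sintegral -(fsbig_widen [set 0%R; 1%R]) => //=; last first.
  move=> t [_ /= /not_orP[t0 t1]]; rewrite preimage10 ?m0 ?mule0// => -[x _].
  by rewrite indicE; case: (_ \in _) => tE; [apply: t1|apply: t0].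
have N01 : (0 <> 1 :> R)%R by apply/eqP; rewrite eq_sym oner_eq0.
rewrite fsbigU//=; last by move=> t [->].
rewrite !fsbig_set1 mul0e add0e mul1e.
by rewrite preimage_indic ifT ?inE// ifN ?notin_setE.
Qed.

Lemma ge0_integralT_sup (f : T -> \bar R) : (forall x, 0 <= f x) ->
  \int[m]_x f x = ereal_sup [set sintegral m h |
      h in [set h : {nnsfun T >-> R} | forall x, (h x)%:E <= f x]].
Proof.
move=> f0; rewrite /integral patch_setT.
have -> : f^\+ = f by apply/funext => x; rewrite (ge0_funeposE (D := setT))// ?inE.
have -> : f^\- = cst 0 by apply/funext => x; rewrite (ge0_funenegE (D := setT))// ?inE.
have s0 : sintegral m (cst 0%R) = 0 by rewrite -(indic0 T R) sintegral_indic_setfun.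
rewrite [X in _ - X](_ : _ = 0) ?sube0//.
rewrite [X in ereal_sup X](_ : _ = [set 0]) ?ereal_sup1//.
apply/seteqP; split => [_ [h /= h0 <-]|_ ->] /=; last by exists nnsfun0.
rewrite -s0; apply: eq_sintegral => x.
by apply/eqP; rewrite eq_le -2!lee_fin h0 /= lee_fin.
Qed.

Lemma ge0_le_integralT (f g : T -> \bar R) : (forall x, 0 <= f x) ->
  (forall x, f x <= g x) -> \int[m]_x f x <= \int[m]_x g x.
Proof.
move=> f0 fg; have g0 x : 0 <= g x := le_trans (f0 x) (fg x).
rewrite !ge0_integralT_sup//; apply: ereal_sup_le => _ [h /= hf <-].
by exists h => //= x; exact: le_trans (hf x) (fg x).
Qed.

Lemma setfun_le_integral_indic (A S : set T) : measurable A -> A `<=` S ->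
  m A <= \int[m]_x (\1_S x)%:E.
Proof.
move=> mA AS; rewrite ge0_integralT_sup// -sintegral_indic_setfun.
apply: ereal_sup_ubound; exists (indic_nnsfun R mA) => //= x.
rewrite lee_fin measurable_realfun.mindicE !indicE.
by case: (boolP (x \in A)) => [/set_mem/AS/mem_set->//|_]; case: (_ \in _).
Qed.

Hypothesis m_ge0 : forall A, 0 <= m A.
Hypothesis le_m : {homo m : A B / A `<=` B >-> A <= B}.
Hypothesis m_superadd : forall A B, A `&` B = set0 -> m A + m B <= m (A `|` B).

Lemma sum_setfun_le_bigU (I : eqType) (s : seq I) (F : I -> set T) :
  uniq s -> trivIset setT F ->
  \sum_(i <- s) m (F i) <= m (\big[setU/set0]_(i <- s) F i).
Proof.
move=> + Fdisj; elim: s => [|i s IHs] /=; first by rewrite !big_nil m0.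
move=> /andP[i_s us]; rewrite !big_cons; apply: le_trans (m_superadd _).
  by apply: leeD => //; exact: IHs.
rewrite big_distrr /= big_seq big1// => j js.
apply/seteqP; split => // t [Fit Fjt].
have ij : i = j by apply: Fdisj => //; exists t.
by move: i_s; rewrite ij js.
Qed.

Lemma sintegral_le_setfun (g : {nnsfun T >-> R}) (S : set T) :
  (forall t, (g t <= \1_S t)%R) -> sintegral m g <= m S.
Proof.
move=> gS; rewrite /sintegral -(fsbig_widen (range g) setT) //; last first.
  by move=> t [_ /= Ng]; rewrite preimage10 ?m0 ?mule0.
rewrite fsbig_finite /=; last exact: fimfunP.
set ys := finmap.enum_fset _.
apply: (@le_trans _ _ (\sum_(y <- ys) m (S `&` g @^-1` [set y]))).
  apply: lee_sum => y _.
  have [[t gty]|Ng] := pselect (exists t, g t = y); last first.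
    by rewrite preimage10 ?m0 ?mule0// => -[t _ gty]; apply: Ng; exists t.
  have y0 : (0 <= y)%R by rewrite -gty fun_ge0.
  have [->|yneq0] := eqVneq y 0%R; first by rewrite mul0e.
  have preS : g @^-1` [set y] `<=` S.
    move=> u /= guy; have := gS u; rewrite guy indicE.
    case: (boolP (u \in S)) => [/set_mem//|_ /= yle0].
    by move: yneq0; rewrite eq_le yle0 y0.
  rewrite setIidr//; apply: gee_pMl => //; rewrite lee_fin -gty.
  by rewrite (le_trans (gS t))// indicE; case: (_ \in _).
apply: le_trans (@sum_setfun_le_bigU _ ys (fun y => S `&` g @^-1` [set y]) _ _) _.
- exact: finmap.fset_uniq.
- by move=> y z _ _ [t [[_ /= <-] [_ /= <-]]].
by apply: le_m; elim/big_ind: _ => // A B AS BS t [/AS|/BS].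
Qed.

Lemma integral_indic_le_setfun (S : set T) : \int[m]_x (\1_S x)%:E <= m S.
Proof.
rewrite ge0_integralT_sup//; apply: ge_ereal_sup => _ [g /= gS <-].
by apply: sintegral_le_setfun => t; rewrite -lee_fin.
Qed.

End setfun_integral.

Section ge0_ereal_supD.
Local Open Scope ereal_scope.
Variable R : realType.

Lemma ge0_ereal_supD_le (A B : set (\bar R)) (c : \bar R) :
  A 0 -> B 0 -> (forall a, A a -> 0 <= a) -> (forall b, B b -> 0 <= b) ->
  (forall a b, A a -> B b -> a + b <= c) -> ereal_sup A + ereal_sup B <= c.
Proof.
move=> A0 B0 A_ge0 B_ge0 ABc.
have c0 : 0 <= c by rewrite -[0]adde0 ABc.
have [cfin|] := boolP (c \is a fin_num); last first.
  by rewrite ge0_fin_numE// -leNgt leye_eq => /eqP->; rewrite leey.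
have fin_le x : 0 <= x -> x <= c -> x \is a fin_num.
  by move=> x0 xc; rewrite ge0_fin_numE// (le_lt_trans xc)// ltey_eq cfin.
have supB0 : 0 <= ereal_sup B by exact: ereal_sup_ubound.
have supBc : ereal_sup B <= c.
  by apply: ge_ereal_sup => b Bb; rewrite -[b]add0e ABc.
suff supA_le a : A a -> a <= c - ereal_sup B.
  by rewrite -(leeBrDr _ _ (fin_le _ supB0 supBc)); exact: ge_ereal_sup.
move=> Aa; have afin : a \is a fin_num by rewrite fin_le ?A_ge0// -[a]adde0 ABc.
rewrite leeBrDl ?fin_le// -(leeBrDr _ _ afin); apply: ge_ereal_sup => b Bb.
by rewrite leeBrDr// addeC ABc.
Qed.
End ge0_ereal_supD.

Section ge0_integralD_ge.
Local Open Scope ereal_scope.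
Context d (T : measurableType d) (R : realType) (mu : {measure set T -> \bar R}).

Lemma ge0_integralD_ge (f g : T -> \bar R) : (forall x, 0 <= f x) ->
  (forall x, 0 <= g x) ->
  \int[mu]_x f x + \int[mu]_x g x <= \int[mu]_x (f x + g x).
Proof.
move=> f0 g0; have fg0 x : 0 <= f x + g x by rewrite adde_ge0.
rewrite !ge0_integralTE//; apply: ge0_ereal_supD_le.
- by exists nnsfun0 => //; rewrite sintegral0.
- by exists nnsfun0 => //; rewrite sintegral0.
- by move=> _ [h _ <-]; exact: sintegral_ge0.
- by move=> _ [h _ <-]; exact: sintegral_ge0.
move=> _ _ [h hf <-] [k kg <-]; rewrite -sintegralD.
apply: ereal_sup_ubound; exists (add_nnsfun h k) => //= x.
by rewrite EFinD; apply: leeD.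
Qed.
End ge0_integralD_ge.

Section prod_pow_measure.
Local Open Scope ereal_scope.
Context (R : realType) (disp : measure_display) (X : measurableType disp).
Variable mu : {measure set X -> \bar R}.
Local Notation P := (prod_pow mu).

Lemma prod_pow_ge0 n A : 0 <= P n A.
Proof.
elim: n A => [|n IHn] A /=; first by rewrite lee_fin indicE; case: (_ \in _).
by apply: integral_ge0 => x _; exact: IHn.
Qed.

Lemma prod_pow_set0 n : P n set0 = 0.
Proof.
elim: n => [|n IHn] /=; first by rewrite indicE in_set0.
by rewrite (eq_integral (cst 0)) ?integral0.
Qed.

Lemma le_prod_pow n : {homo P n : A B / A `<=` B >-> A <= B}.
Proof.
elim: n => [|n IHn] A B AB /=.
  rewrite lee_fin !indicE; case: (boolP (_ \in A)) => [/set_mem/AB/mem_set->//|_].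
  by case: (_ \in _).
apply: ge0_le_integralT => [|x|x]; [exact: measure0|exact: prod_pow_ge0|].
by apply: IHn => t /AB.
Qed.

Lemma prod_pow_superadd n A B : A `&` B = set0 -> P n A + P n B <= P n (A `|` B).
Proof.
elim: n A B => [|n IHn] A B AB /=.
  rewrite -EFinD lee_fin !indicE.
  case: (boolP (_ \in A)) => [/set_mem Ax|_]; case: (boolP (_ \in B)) => [/set_mem Bx|_].
  - by move/seteqP: AB => [/(_ (nil_tuple X) (conj Ax Bx))].
  - by rewrite mem_set ?addr0//; left.
  - by rewrite mem_set ?add0r//; right.
  - by rewrite addr0; case: (_ \in _).
apply: le_trans (ge0_integralD_ge _ _ _) _ => [x|x|]; [exact: prod_pow_ge0..|].
apply: ge0_le_integralT => [|x|x]; [exact: measure0|by rewrite adde_ge0 ?prod_pow_ge0|].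
apply: le_trans (IHn _ _ _) _.
  apply/seteqP; split => // t [/= At Bt].
  by have /seteqP[/(_ (cons_tuple x t) (conj At Bt))] := AB.
by apply: le_prod_pow => t.
Qed.
End prod_pow_measure.

Definition box {X : Type} n (B : set X) : set (n.-tuple X) :=
  [set t | forall i, B (tnth t i)].

Lemma box_cons {X : Type} n (B : set X) x (t : n.-tuple X) :
  box B (cons_tuple x t) <-> B x /\ box B t.
Proof.
split=> [Bxt|[Bx Bt] i]; first split.
- by have := Bxt ord0; rewrite tnth0.
- by move=> i; have := Bxt (lift ord0 i); rewrite tnthS.
by case: (unliftP ord0 i) => [j ->|->]; rewrite ?tnthS ?tnth0.
Qed.

Section prod_pow_probability.
Local Open Scope ereal_scope.
Context (R : realType) (disp : measure_display) (X : measurableType disp).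
Variable mu : probability X R.
Local Notation P := (prod_pow mu).

Lemma prod_pow_le1 n A : P n A <= 1.
Proof.
elim: n A => [|n IHn] A /=; first by rewrite lee_fin indicE; case: (_ \in _).
apply: le_trans (ge0_le_integralT (measure0 mu) (g := cst 1) _ _) _.
- by move=> x; exact: prod_pow_ge0.
- by move=> x; exact: IHn.
by rewrite integral_cst// mul1e probability_le1.
Qed.

Lemma prod_pow_box n B : measurable B -> P n (box B) = (fine (mu B) ^+ n)%:E.
Proof.
move=> mB; elim: n => [|n IHn] /=; first by rewrite indicE mem_set// => -[].
have muBfin : mu B \is a fin_num by rewrite fin_num_measure.
rewrite (eq_integral (fun x => (fine (mu B) ^+ n * \1_B x)%:E)); last first.
  move=> x _; rewrite indicE; case: (boolP (x \in B)) => [/set_mem Bx|/negP nBx].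
    rewrite mulr1 -IHn; congr (P n _); apply/seteqP.
    by split => t; rewrite /= box_cons => //; case.
  rewrite mulr0 (_ : [set t | _] = set0) ?prod_pow_set0//.
  by apply/seteqP; split => t //= /box_cons [Bx _]; apply: nBx; exact: mem_set.
rewrite integralZl_indic//; last by rewrite ltNge exprn_ge0// fine_ge0.
by rewrite integral_indic// setIT exprSr EFinM fineK.
Qed.
End prod_pow_probability.

Section metric.
Context {R : realType} {X : pointedType} (d : X -> X -> R).
Hypothesis d_metric : is_metric d.

Lemma metricxx x : d x x = 0. Proof. by case: d_metric => _ /(_ x x) [_ ->]. Qed.
Lemma metricC x y : d x y = d y x. Proof. by case: d_metric. Qed.
Lemma metric_triangle x y z : d x z <= d x y + d y z. Proof. by case: d_metric. Qed.

Lemma oball_open x r : metric_open d (oball d x r).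
Proof.
move=> y /= xy; exists (r - d x y); first by rewrite subr_gt0.
move=> z; rewrite /oball /= => yz.
by rewrite (le_lt_trans (metric_triangle x y z))// -ltrBrDl.
Qed.

Hypothesis X_findim : finite_dimensional d.

Lemma cover_doubling (rho : R) (cs : seq X) : 0 < rho ->
  exists cs' : seq X, forall c y, c \in cs -> d c y < 2 * rho ->
    exists2 c', c' \in cs' & d c' y < rho.
Proof.
move=> rho0; case: X_findim => N cover.
elim: cs => [|c cs [cs' IHcs]]; first by exists [::].
have [f cf] := cover c rho rho0.
exists (map f (enum 'I_N) ++ cs') => c' y; rewrite in_cons => /predU1P[->|c'cs] c'y.
  have [i _ /= iy] := cf y c'y; exists (f i) => //.
  by rewrite mem_cat map_f ?mem_enum.
have [c'' c''cs' c''y] := IHcs c' y c'cs c'y.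
by exists c'' => //; rewrite mem_cat c''cs' orbT.
Qed.

Lemma cover_oball (x : X) (j : nat) (rho : R) : 0 < rho ->
  exists cs : seq X, forall y, d x y < 2 ^+ j * rho ->
    exists2 c, c \in cs & d c y < rho.
Proof.
elim: j rho => [|j IHj] rho rho0.
  by exists [:: x] => y; rewrite mul1r => xy; exists x; rewrite ?mem_seq1.
have [cs csP] := IHj (2 * rho) (mulr_gt0 (ltr0Sn _ 1) rho0).
have [cs' cs'P] := cover_doubling cs rho0.
exists cs' => y; rewrite exprSr -mulrA => /csP[c ccs cy]; exact: cs'P ccs cy.
Qed.

Lemma findim_net (rho : R) : 0 < rho ->
  exists q : nat -> nat -> X, forall y, exists m i, d (q m i) y < rho.
Proof.
move=> rho0; have /choice[cs csP] := fun m => cover_oball point m rho0.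
exists (fun m => nth point (cs m)) => y.
pose m := Num.trunc (d point y / rho).
have /csP[c ccs cy] : d point y < 2 ^+ m.+1 * rho.
  rewrite -ltr_pdivrMr// (lt_le_trans (truncnS_gt _))// -natrX ler_nat.
  exact/ltnW/ltn_expl.
by exists m.+1, (index c (cs m.+1)); rewrite nth_index.
Qed.

End metric.

Section metric_measurable.
Context {R : realType} {disp : measure_display} {X : measurableType disp}.
Variable d : X -> X -> R.
Hypothesis d_metric : is_metric d.
Hypothesis X_findim : finite_dimensional d.
Hypothesis X_borel : forall A : set X, measurable A <-> <<s metric_open d >> A.

Lemma measurable_oball x r : measurable (oball d x r).
Proof. by apply/X_borel; apply: sub_gen_smallest; exact: oball_open. Qed.

Definition dist_lt (s : R) : set (X * X) := [set p | d p.1 p.2 < s].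

(* [dist_lt s] is the union of the products B(c, rho) x B(c, s - rho) over the
   points c of countable rho-nets, rho = 1/(n+1). *)
Lemma measurable_dist_lt s : measurable (dist_lt s).
Proof.
pose rho n : R := n.+1%:R^-1.
have rho_gt0 n : 0 < rho n by rewrite invr_gt0.
have /choice[q qP] := fun n => findim_net X_findim (rho_gt0 n).
suff -> : dist_lt s = \bigcup_n \bigcup_m \bigcup_i
    (oball d (q n m i) (rho n) `*` oball d (q n m i) (s - rho n)).
  apply: bigcupT_measurable => n; apply: bigcupT_measurable => m.
  apply: bigcupT_measurable => i.
  by apply: measurableX; exact: measurable_oball.
apply/seteqP; split => [[x y] /= xy|[x y] [n _ [m _ [i _ [/= qx qy]]]]]; last first.
  rewrite /dist_lt /= (le_lt_trans (metric_triangle d_metric x (q n m i) y))//.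
  by move: qx qy; rewrite /oball/= (metricC d_metric x); lra.
have [n] : exists n, 0 + rho n < (s - d x y) / 2.
  by apply: ltr_add_invr; rewrite divr_gt0// subr_gt0.
rewrite add0r => rho_lt; have [m [i qx]] := qP n x.
exists n => //; exists m => //; exists i => //; split => //=.
rewrite /oball /= (le_lt_trans (metric_triangle d_metric _ x _))//.
move: rho_lt qx; lra.
Qed.

Lemma exists_oball_gt0 (mu : probability X R) (rho : R) : 0 < rho ->
  exists c, (0 < mu (oball d c rho))%E.
Proof.
move=> rho0; apply: contrapT => /forallNP mu0.
have [q qP] := findim_net X_findim rho0.
have : mu.-negligible (\bigcup_m \bigcup_i oball d (q m i) rho).
  apply: negligible_bigcup => m; apply: negligible_bigcup => i.
  exists (oball d (q m i) rho); split => //; first exact: measurable_oball.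
  by apply/eqP; rewrite eq_le measure_ge0 andbT leNgt; apply/negP/mu0.
move=> [N [mN muN0 coverN]].
have : (mu setT <= mu N)%E.
  apply: le_measure; rewrite ?inE// => x _.
  by apply: coverN; have [m [i qx]] := qP x; exists m => //; exists i.
by rewrite probability_setT muN0 lee_fin ler10.
Qed.

End metric_measurable.

Section correlation_integrals.
Context {R : realType} {disp : measure_display} {X : measurableType disp}.
Variable d : X -> X -> R.
Hypothesis d_metric : is_metric d.
Hypothesis X_findim : finite_dimensional d.
Hypothesis X_borel : forall A : set X, measurable A <-> <<s metric_open d >> A.
Variable mu : probability X R.
Local Notation P := (prod_pow mu).

Definition head_ball n r : set (n.+1.-tuple X) :=
  [set t | forall i, d (tnth t ord0) (tnth t i) < r].
Arguments head_ball : clear implicits.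

Definition pairwise_close k r : set (k.-tuple X) :=
  [set t | forall j l : 'I_k, (j < l)%N -> d (tnth t j) (tnth t l) < r].
Arguments pairwise_close : clear implicits.

Lemma measurable_head_ball n r : measurable (head_ball n r).
Proof.
rewrite (_ : head_ball n r = \bigcap_(i in [set: 'I_n.+1])
    ((fun t => (tnth t ord0, tnth t i)) @^-1` dist_lt d r)).
  apply: fin_bigcap_measurable => [|i _]; first exact: finite_finset.
  rewrite -[X in measurable X]setTI.
  apply: (measurable_fun_pair (measurable_tnth ord0) (measurable_tnth i)) => //.
  exact: measurable_dist_lt.
by apply/seteqP; split => t tr i //=; [move=> _; exact: tr|exact: tr].
Qed.

Lemma head_ball_sub_pairwise_close n r :
  head_ball n (r / 2) `<=` pairwise_close n.+1 r.
Proof.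
move=> t t0 j l _; rewrite (le_lt_trans (metric_triangle d_metric _ (tnth t ord0) _))//.
by rewrite (metricC d_metric (tnth t j)); have := t0 j; have := t0 l; lra.
Qed.

Lemma pairwise_close_sub_head_ball n r : 0 < r ->
  pairwise_close n.+1 r `<=` head_ball n r.
Proof.
move=> r0 t tr i; have [->|i0] := eqVneq i ord0; first by rewrite metricxx.
by apply: tr; rewrite lt0n.
Qed.

Local Open Scope ereal_scope.

Lemma corr_integralE n r : (0 < r)%R ->
  corr_integral d mu n.+1 r = P n.+1 (head_ball n r).
Proof.
move=> r0 /=; apply: eq_integral => x _.
rewrite -prod_pow_box; last exact: measurable_oball.
congr (P n _); apply/seteqP; split => t tr.
  move=> i; case: (unliftP ord0 i) => [j ->|->]; first by rewrite tnthS tnth0; exact: tr.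
  by rewrite tnth0 /oball /= metricxx.
by move=> i; have := tr (lift ord0 i); rewrite tnthS tnth0.
Qed.

Lemma corr_integral_le1 n r : (0 < r)%R -> corr_integral d mu n.+1 r <= 1.
Proof. by move=> r0; rewrite corr_integralE// prod_pow_le1. Qed.

Lemma corr_integral_gt0 k r : (0 < r)%R -> 0 < corr_integral d mu k r.
Proof.
move=> r0; have r20 : (0 < r / 2)%R by rewrite divr_gt0.
have [c muc0] := exists_oball_gt0 d_metric X_findim X_borel mu r20.
set E := oball d c (r / 2).
have mE : measurable E by exact: measurable_oball.
have muEfin : mu E \is a fin_num by rewrite fin_num_measure.
set a := fine (mu E); have a0 : (0 < a)%R by rewrite fine_gt0// muc0 ltey_eq muEfin.
apply: (@lt_le_trans _ _ (\int[mu]_x (a ^+ k.-1 * \1_E x)%:E)).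
  rewrite (integralZl_indic _ (fun=> E))//; last by rewrite ltNge exprn_ge0// ltW.
  by rewrite integral_indic// setIT mule_gt0// lte_fin exprn_gt0.
apply: ge0_le_integralT => [|x|x]; first exact: measure0.
  by rewrite lee_fin mulr_ge0 ?exprn_ge0 ?(ltW a0)// indicE; case: (_ \in _).
(* every point x of E sees the whole of E inside B(x, r) *)
rewrite lee_fin indicE; case: (boolP (x \in E)) => [/set_mem Ex|_]; last first.
  by rewrite mulr0 exprn_ge0// fine_ge0.
rewrite mulr1 lerXn2r ?nnegrE ?fine_ge0 ?(ltW a0)//; apply: fine_le => //.
  by rewrite fin_num_measure//; exact: measurable_oball.
apply: le_measure; rewrite ?inE//; first exact: measurable_oball.
move=> y Ey; rewrite /oball /= (le_lt_trans (metric_triangle d_metric _ c _))//.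
by move: Ex Ey; rewrite /E /oball /= (metricC d_metric x); lra.
Qed.

Lemma chain_integralE k r :
  chain_integral d mu k r = \int[P k]_t (\1_(pairwise_close k r) t)%:E.
Proof.
congr integral; apply/funext => t; congr EFin; rewrite indicE.
case: (boolP (t \in _)) => [/set_mem tr|/negP tNr].
  by rewrite big1// => j _; rewrite big1// => l jl; rewrite indicE mem_set//; exact: tr.
have [j [l [jl tjl]]] : exists j l : 'I_k, (j < l)%N /\ ~ (d (tnth t j) (tnth t l) < r)%R.
  apply: contra_notP tNr => tr; apply/mem_set => j l jl.
  by apply: contra_notP tr => tjl; exists j, l.
by rewrite (bigD1 j)//= (bigD1 l)//= indicE memNset ?mul0r.
Qed.

Lemma corr_integral_half_le_chain n r : (0 < r)%R ->
  corr_integral d mu n.+1 (r / 2) <= chain_integral d mu n.+1 r.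
Proof.
move=> r0; rewrite corr_integralE ?divr_gt0// chain_integralE.
apply: setfun_le_integral_indic; first exact: prod_pow_set0.
  exact: measurable_head_ball.
exact: head_ball_sub_pairwise_close.
Qed.

Lemma chain_le_corr_integral n r : (0 < r)%R ->
  chain_integral d mu n.+1 r <= corr_integral d mu n.+1 r.
Proof.
move=> r0; rewrite corr_integralE// chain_integralE.
apply: le_trans _ (le_prod_pow _ (pairwise_close_sub_head_ball r0)).
apply: integral_indic_le_setfun.
- exact: prod_pow_set0.
- exact: prod_pow_ge0.
- exact: le_prod_pow.
- exact: prod_pow_superadd.
Qed.
End correlation_integrals.

Section correlation_ratios.
Context {R : realType} {disp : measure_display} {X : measurableType disp}.
Variable d : X -> X -> R.
Hypothesis d_metric : is_metric d.
Hypothesis X_findim : finite_dimensional d.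
Hypothesis X_borel : forall A : set X, measurable A <-> <<s metric_open d >> A.
Variable mu : probability X R.
Local Open Scope ereal_scope.

Definition corr_ratio k (r : R) : \bar R :=
  ((ln (fine (corr_integral d mu k r)) / ln r)%R)%:E.

Lemma Dk_ratioE k r : (0 < k)%N ->
  k%:R%:E * Dk_ratio d mu k.+1 r = corr_ratio k.+1 r.
Proof.
by move=> k0; rewrite /Dk_ratio -EFinM /= invfM mulrCA mulVKf// pnatr_eq0 -lt0n.
Qed.

Variable k : nat.
Local Notation corr := (corr_integral d mu k.+1).
Local Notation chain := (chain_integral d mu k.+1).

Lemma fine_corr_chain_bounds r : (0 < r)%R ->
  [/\ (0 < fine (corr (r / 2)))%R, (fine (corr (r / 2)) <= fine (chain r))%R,
      (fine (chain r) <= fine (corr r))%R & (fine (corr r) <= 1)%R].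
Proof.
move=> r0; have r20 : (0 < r / 2)%R by rewrite divr_gt0.
have c2_gt0 := corr_integral_gt0 d_metric X_findim X_borel mu k.+1 r20.
have c2_chain := corr_integral_half_le_chain d_metric X_findim X_borel mu k r0.
have chain_c := chain_le_corr_integral d_metric X_borel mu k r0.
have c_le1 := corr_integral_le1 d_metric X_borel mu k r0.
have c2_le1 := corr_integral_le1 d_metric X_borel mu k r20.
have fin (x : \bar R) : 0 <= x -> x <= 1 -> x \is a fin_num.
  by move=> x0 x1; rewrite ge0_fin_numE// (le_lt_trans x1) ?ltry.
have chain_ge0 := le_trans (ltW c2_gt0) c2_chain.
have f_c2 := fin _ (ltW c2_gt0) c2_le1.
have f_chain := fin _ chain_ge0 (le_trans chain_c c_le1).
have f_c := fin _ (le_trans chain_ge0 chain_c) c_le1.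
split; [by rewrite fine_gt0// c2_gt0 ltey_eq f_c2|exact: fine_le..|].
by rewrite -lee_fin fineK.
Qed.

Lemma corr_ratio_le_chain_ratio :
  \forall r \near 0%R^'+, corr_ratio k.+1 r <= chain_ratio d mu k.+1 r.
Proof.
near=> r; have r0 : (0 < r)%R by near: r; exact: nbhs_right_gt.
have r1 : (r < 1)%R by near: r; exact: nbhs_right_lt.
have [c2_gt0 c2_chain chain_c _] := fine_corr_chain_bounds r0.
rewrite lee_fin; apply: ler_wnM2r; first by rewrite invr_le0 ltW// ln_lt0// r0.
have chain_gt0 := lt_le_trans c2_gt0 c2_chain.
by rewrite ler_ln ?posrE// (lt_le_trans chain_gt0).
Unshelve. all: by end_near. Qed.

Lemma chain_ratio_le_corr_ratio_half c : (1 < c)%R ->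
  \forall r \near 0%R^'+, chain_ratio d mu k.+1 r <= c%:E * corr_ratio k.+1 (r / 2).
Proof.
move=> c1; near=> r; have r0 : (0 < r)%R by near: r; exact: nbhs_right_gt.
have [c2_gt0 c2_chain chain_c c_le1] := fine_corr_chain_bounds r0.
rewrite -EFinM lee_fin ln_ratio_halve_le ?c2_gt0 ?c2_chain ?(le_trans chain_c)//.
rewrite -ler_expR lnK ?posrE//; near: r; apply: nbhs_right_le; exact: expR_gt0.
Unshelve. all: by end_near. Qed.

End correlation_ratios.

Theorem mainTheorem10 (R : realType) (disp : measure_display)
  (X : measurableType disp) (d : X -> X -> R)
  (d_metric : is_metric d) (X_findim : finite_dimensional d)
  (X_borel : forall A : set X, measurable A <-> <<s metric_open d >> A)
  (mu : probability X R) (k : nat) (hk : (2 <= k)%N) :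
  ((k.-1)%:R%:E * lower_Dk d mu k = limf_einf (chain_ratio d mu k) (0%R)^'+)%E /\
  ((k.-1)%:R%:E * upper_Dk d mu k = limf_esup (chain_ratio d mu k) (0%R)^'+)%E.
Proof.
case: k hk => [|[|n]] // _; rewrite /lower_Dk /upper_Dk /=.
have DkE : (fun r => n.+1%:R%:E * Dk_ratio d mu n.+2 r)%E = corr_ratio d mu n.+2.
  by apply/funext => r; exact: Dk_ratioE.
have lower := corr_ratio_le_chain_ratio d_metric X_findim X_borel mu n.+1.
have upper := chain_ratio_le_corr_ratio_half d_metric X_findim X_borel mu n.+1.
split.
- by rewrite -limf_einfZl// DkE; exact: limf_einf_sandwich_half.
- by rewrite -limf_esupZl// DkE; exact: limf_esup_sandwich_half.
Qed.
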